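(* Let $x(t)=x^{(N)}(t)$ be the Markov process with generator $L=L_0+L_s$ defined in the context, with initial condition $x(0)$ satisfying $\mathsf E|M(x(0))|<\infty$, and let $\mu_N(t):=\mathsf E\,M(x(t))$. Then for every fixed $t>0$, $\lim_{N\to\infty}\frac{\mu_N(t)-\mu_N(0)}{t}=\alpha a$. Moreover, for every function $t(N)\to\infty$, $\frac{\mu_N(t(N))-\mu_N(0)}{t(N)}\to\alpha a$ as $N\to\infty$.
   Context: Fix an integer $k\ge2$ and integers $k_1,\dots,k_l\ge2$ with $k_1+\dots+k_l=k$ (fixed independently of $N$). For $N\ge k$, let $\mathcal I$ be the set of ordered $k$-tuples $(i_1,\dots,i_k)$ of pairwise distinct elements of $\{1,\dots,N\}$. For $(i_1,\dots,i_k)\in\mathcal I$ split it into consecutive blocks $\Gamma_1,\dots,\Gamma_l$ of lengths $k_1,\dots,k_l$ and let $g_j$ be the first element of $\Gamma_j$. The synchronization map $J^{(i_1,\dots,i_k)}:\mathbb{R}^N\to\mathbb{R}^N$, $x\mapsto y$, is $y_m=x_m$ if $m\notin\{i_1,\dots,i_k\}$ and $y_m=x_{g_j}$ if $m\in\Gamma_j$. Let $\alpha>0,\delta>0$ (independent of $N$), and let $\rho$ be a probability measure on $\mathbb{R}$ with compact support, $b_2:=\int z^2\rho(dz)>0$, $a:=\int z\rho(dz)$. The process $x(t)=(x_1(t),\dots,x_N(t))\in\mathbb{R}^N$ is the continuous-time Markov jump process with generator $L=L_0+L_s$, $(L_0f)(x)=\alpha\sum_{i=1}^N\int\big(f(x+ze_i)-f(x)\big)\rho(dz)$,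 $(L_sf)(x)=\frac{\delta}{N(N-1)\cdots(N-k+1)}\sum_{(i_1,\dots,i_k)\in\mathcal I}\big(f(J^{(i_1,\dots,i_k)}x)-f(x)\big)$: each particle independently jumps $x_i\to x_i+z$, $z\sim\rho$, at rate $\alpha$, and independently at rate $\delta$ a uniformly random tuple of $\mathcal I$ is chosen and the configuration is replaced by $J^{(i_1,\dots,i_k)}x$. $M(x)=\frac1N\sum_{m=1}^N x_m$. *)

From HB Require Import structures.
From mathcomp Require Import all_boot all_order all_algebra.
From mathcomp Require Import all_classical all_reals all_analysis.
Set Implicit Arguments. Unset Strict Implicit. Unset Printing Implicit Defensive.
Import Order.TTheory GRing.Theory Num.Theory.
Local Open Scope ring_scope.

Section SyncModel.
Variables (R : realType) (ks : seq nat) (N : nat).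
Variables (alpha delta : R) (rho : probability R R).

Definition config := 'I_N -> R.

Definition ktot := sumn ks.

Definition Mmean (x : config) : R := (\sum_(m < N) x m) / N%:R.

Definition shift (i : 'I_N) (z : R) (x : config) : config :=
  fun j => if j == i then x j + z else x j.

(* start position (0-based) of the block containing position p of a tuple:
   the largest partial sum k_1+...+k_j (j = 0..l) which is <= p *)
Definition bstart (p : nat) : nat :=
  (\max_(s <- 0 :: scanl addn 0 ks | s <= p) s)%N.

Definition sync (t : ktot.-tuple 'I_N) (x : config) : config :=
  fun m => if m \in val t then x (nth m (val t) (bstart (index m (val t))))
           else x m.

Definition gen (f : config -> R) (x : config) : R :=
  alpha * \sum_(i < N) Rintegral rho setT (fun z => f (shift i z x) - f x)
  + delta / (N ^_ ktot)%:R *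
    \sum_(t : ktot.-tuple 'I_N | uniq t) (f (sync t x) - f x).

(* total jump rate and the jump (uniformized) Markov kernel K = I + L/Lambda *)
Definition Lambda : R := N%:R * alpha + delta.
Definition Kop (f : config -> R) (x : config) : R := f x + gen f x / Lambda.

(* transition semigroup by uniformization:
   (P_t f)(x) = sum_n e^{-Lambda t} (Lambda t)^n / n! (K^n f)(x) = E_x f(x(t)) *)
Definition Pt (t : R) (f : config -> R) (x : config) : R :=
  limn (fun m => \sum_(n < m)
          expR (- (Lambda * t)) * (Lambda * t) ^+ n / (n`!)%:R * iter n Kop f x).

End SyncModel.

(* mu_N(t) = E M(x(t)) = E [ (P_t M)(x(0)) ] for random initial condition X0 *)
Definition mu (R : realType) (ks : seq nat) (alpha delta : R)
  (rho : probability R R) (d : measure_display) (Omega : measurableType d)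
  (P : probability Omega R) (N : nat) (X0 : Omega -> config R N) (t : R) : R :=
  Rintegral P setT
    (fun w => Pt ks alpha delta rho t (@Mmean R N) (X0 w)).

From Pilot Require Import Defs.
From HB Require Import structures.
From mathcomp Require Import all_boot all_order all_algebra.
From mathcomp Require Import all_classical all_reals all_analysis.
From mathcomp Require Import perm ring.
Import Order.TTheory GRing.Theory Num.Theory numFieldNormedType.Exports.
Local Open Scope ring_scope.
Local Open Scope classical_set_scope.

(* Synchronization preserves the empirical mean on average: a transposition of
   positions permutes the tuples of distinct indices, so summed over all such
   tuples the value of x at the first entry of a block equals its value at any
   other entry.  Hence L M = alpha a exactly, each step of the uniformized
   kernel K = I + L/Lambda adds alpha a/Lambda to M, and averaging K^n M over a
   Poisson(Lambda t) number of steps gives P_t M = M + alpha a t.  Thus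
   mu_N(t) - mu_N(0) = alpha a t for all N >= 1 and all t, and both limits are
   limits of eventually constant sequences. *)

Section UniqTupleSymmetry.
Variables (T : finType) (k : nat).

Definition tuple_tperm (p q : 'I_k) (t : k.-tuple T) : k.-tuple T :=
  [tuple tnth t (tperm p q j) | j < k].

Lemma tuple_tpermK p q : involutive (tuple_tperm p q).
Proof.
by move=> t; apply: eq_from_tnth => j; rewrite !tnth_mktuple tpermK.
Qed.

Lemma uniq_tuple_tperm p q t : uniq (tuple_tperm p q t) = uniq t.
Proof.
have uniq_tperm (s : k.-tuple T) : uniq s -> uniq (tuple_tperm p q s).
  move=> /tuple_uniqP inj_s; apply/tuple_uniqP => i j.
  by rewrite !tnth_mktuple => /inj_s /perm_inj.
apply/idP/idP; last exact: uniq_tperm.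
by move=> /uniq_tperm; rewrite tuple_tpermK.
Qed.

Lemma sum_uniq_tuple_tnth (V : nmodType) (F : T -> V) (p q : 'I_k) :
  \sum_(t : k.-tuple T | uniq t) F (tnth t p) =
  \sum_(t : k.-tuple T | uniq t) F (tnth t q).
Proof.
rewrite (reindex_inj (inv_inj (tuple_tpermK p q))) /=.
apply: eq_big => t; first exact: uniq_tuple_tperm.
by rewrite tnth_mktuple tpermL.
Qed.

End UniqTupleSymmetry.

Arguments sum_uniq_tuple_tnth {T k V}.

Lemma bstart_leq ks p : (bstart ks p <= p)%N.
Proof.
by rewrite /bstart; elim/big_ind: _ => // u v; rewrite geq_max => -> ->.
Qed.

Definition bstart_ord {ks} (p : 'I_(ktot ks)) : 'I_(ktot ks) :=
  Ordinal (leq_ltn_trans (bstart_leq ks p) (ltn_ord p)).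

Section SyncConservation.
Variables (R : realType) (ks : seq nat) (N : nat).

Lemma sum_sync_subr (t : (ktot ks).-tuple 'I_N) (x : config R N) : uniq t ->
  \sum_(m < N) (sync t x m - x m) =
  \sum_(p < ktot ks) (x (tnth t (bstart_ord p)) - x (tnth t p)).
Proof.
move=> uniq_t.
rewrite (bigID (mem (val t))) /= [X in _ + X]big1; last first.
  by move=> m /negbTE m_notin_t; rewrite /sync m_notin_t subrr.
rewrite addr0 -big_uniq //= big_tuple; apply: eq_bigr => p _.
rewrite /sync mem_tnth (tnth_nth (tnth t p)) index_uniq ?size_tuple //.
congr (x _ - _); rewrite [RHS](tnth_nth (tnth t p)); apply: set_nth_default.
by rewrite size_tuple; exact: ltn_ord (bstart_ord p).
Qed.

Lemma sum_Mmean_sync (x : config R N) :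
  \sum_(t : (ktot ks).-tuple 'I_N | uniq t) (Mmean (sync t x) - Mmean x) = 0.
Proof.
transitivity (\sum_(t : (ktot ks).-tuple 'I_N | uniq t)
   (\sum_(p < ktot ks) (x (tnth t (bstart_ord p)) - x (tnth t p))) / N%:R).
  apply: eq_bigr => t uniq_t.
  by rewrite /Mmean -mulrBl -sumrB sum_sync_subr.
rewrite -mulr_suml exchange_big /= big1 ?mul0r // => p _.
by rewrite sumrB (sum_uniq_tuple_tnth x (bstart_ord p) p) subrr.
Qed.

End SyncConservation.

Lemma series_natr_mul_exp_coeff (R : realType) (y : R) m :
  \sum_(n < m.+1) n%:R * exp_coeff y n = y * series (exp_coeff y) m.
Proof.
have natr_mul_exp_coeffS n : n.+1%:R * exp_coeff y n.+1 = y * exp_coeff y n.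
  have fact_neq0 : n`!%:R != 0 :> R by rewrite pnatr_eq0 -lt0n fact_gt0.
  rewrite !exp_coeffE /= factS natrM exprS; field.
  by rewrite fact_neq0 /= -(natrD _ 1 n) add1n pnatr_eq0.
rewrite big_ord_recl mul0r add0r /series /= big_mkord mulr_sumr.
by apply: eq_bigr => i _; rewrite /bump /= add1n natr_mul_exp_coeffS.
Qed.

Lemma integrable_id_bounded_support {R : realType}
    {mu : {finite_measure set R -> \bar R}} {C : R} :
  mu [set z | C < `|z|] = 0%E -> mu.-integrable setT (EFin \o id).
Proof.
move=> mu_tail0.
have mtail : measurable [set z : R | C < `|z|].
  have := measurable_realfun.normr_measurable measurableT (@measurable_itv R `]C, +oo[%R).
  by rewrite setTI; congr measurable; apply/seteqP; split => z /=;
    rewrite in_itv /= andbT.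
rewrite (negligible_integrable mtail measurableT _ mu_tail0); last first.
  exact/measurable_realfun.measurable_EFinP.
apply: measurable_bounded_integrable => //.
- exact: measurableD.
- by rewrite ltey_eq fin_num_measure //; exact: measurableD.
- exists C; split; first exact: num_real.
  by move=> M CltM z [_ /negP]; rewrite -leNgt /= => /le_trans; apply; exact: ltW.
Qed.

Section MeanDrift.
Variables (R : realType) (ks : seq nat) (alpha delta : R) (rho : probability R R).
Variable N : nat.
Hypothesis N_gt0 : (0 < N)%N.
Hypothesis rho_int : rho.-integrable setT (EFin \o id).

Let a := Rintegral rho setT id.

Lemma gen_addr_const (f : config R N -> R) c x :
  gen ks alpha delta rho (fun y => f y + c) x = gen ks alpha delta rho f x.
Proof.
have addrK_sub u v : u + c - (v + c) = u - v by rewrite opprD addrACA subrr addr0.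
rewrite /gen; congr (_ * _ + _ * _); apply: eq_bigr => j _; last exact: addrK_sub.
by congr (Rintegral _ _ _); apply/funext => z; rewrite addrK_sub.
Qed.

Lemma gen_Mmean x : gen ks alpha delta rho (@Mmean R N) x = alpha * a.
Proof.
rewrite /gen sum_Mmean_sync mulr0 addr0; congr (_ * _).
have N_neq0 : N%:R != 0 :> R by rewrite pnatr_eq0 -lt0n.
transitivity (\sum_(i < N) (a / N%:R)); last first.
  by rewrite sumr_const card_ord -[_ *+ N]mulr_natr divfK.
apply: eq_bigr => i _; rewrite -RintegralZr //; congr (Rintegral _ _ _).
apply/funext => z; rewrite /Mmean -mulrBl /Defs.shift; congr (_ * _).
rewrite (bigD1 i) //= [X in _ - X](bigD1 i) //= eqxx.
rewrite (eq_bigr (fun j => x j)); last by move=> j /negbTE ->.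
by ring.
Qed.

Lemma iter_Kop_Mmean n :
  iter n (Kop ks alpha delta rho) (@Mmean R N) =
  (fun y => Mmean y + n%:R * (alpha * a / Lambda N alpha delta)).
Proof.
elim: n => [|n IH]; first by apply/funext => y /=; rewrite mul0r addr0.
apply/funext => y; rewrite iterS IH /Kop gen_addr_const gen_Mmean -addn1 natrD.
ring.
Qed.

Hypothesis Lambda_neq0 : Lambda N alpha delta != 0.

Lemma Pt_Mmean (t : R) x :
  Pt ks alpha delta rho t (@Mmean R N) x = Mmean x + alpha * a * t.
Proof.
set L := Lambda N alpha delta; set y := L * t; set E := expR (- y).
set c := alpha * a / L.
have partial_sums m :
    \sum_(n < m.+1) E * y ^+ n / n`!%:R * iter n (Kop ks alpha delta rho) (@Mmean R N) x =
    E * Mmean x * series (exp_coeff y) m.+1 + E * c * y * series (exp_coeff y) m.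
  under eq_bigr => n _ do rewrite iter_Kop_Mmean.
  transitivity (\sum_(n < m.+1)
      (E * Mmean x * exp_coeff y n + E * c * (n%:R * exp_coeff y n))).
    by apply: eq_bigr => n _; rewrite exp_coeffE /= /c; ring.
  rewrite big_split /= -!mulr_sumr series_natr_mul_exp_coeff.
  by rewrite [series _ m.+1]/series /= big_mkord; ring.
have cvg_Pt : (fun m => \sum_(n < m)
      E * y ^+ n / n`!%:R * iter n (Kop ks alpha delta rho) (@Mmean R N) x) @ \oo -->
    E * Mmean x * expR y + E * c * y * expR y.
  rewrite -cvg_shiftS /=; under eq_fun do rewrite partial_sums.
  apply: cvgD; apply: cvgMr; last exact: is_cvg_series_exp_coeff.
  by rewrite (cvg_shiftS (series (exp_coeff y))); exact: is_cvg_series_exp_coeff.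
rewrite /Pt -/L -/y -/E (cvg_lim _ cvg_Pt) // /E expRN /c /y; field.
by rewrite Lambda_neq0 /= gt_eqF ?expR_gt0.
Qed.

Lemma mu_linear (d : measure_display) (Omega : measurableType d)
    (P : probability Omega R) (X0 : Omega -> config R N) (t : R) :
  P.-integrable setT (fun w => (Mmean (X0 w))%:E) ->
  mu ks alpha delta rho P X0 t =
  Rintegral P setT (fun w => Mmean (X0 w)) + alpha * a * t.
Proof.
move=> X0_int; rewrite /mu.
under eq_fun do rewrite Pt_Mmean.
rewrite RintegralD //; last exact: finite_measure_integrable_cst.
rewrite Rintegral_cst // (_ : fine _ = 1) ?mulr1 //.
exact: (f_equal fine (probability_setT P)).
Qed.

End MeanDrift.

Theorem theorem1 (R : realType) (ks : seq nat)
  (hks : all (fun kj => 2 <= kj)%N ks) (hl : ks != [::])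
  (alpha delta : R) (halpha : 0 < alpha) (hdelta : 0 < delta)
  (rho : probability R R)
  (hsupp : exists C : R, rho [set z | C < `|z|] = 0%E)
  (hb2 : 0 < Rintegral rho setT (fun z => z ^+ 2))
  (d : measure_display) (Omega : measurableType d) (P : probability Omega R)
  (X0 : forall N : nat, Omega -> config R N)
  (hX0meas : forall (N : nat) (i : 'I_N), measurable_fun setT (fun w => X0 N w i))
  (hX0int : forall N : nat,
      P.-integrable setT (fun w => (Mmean (X0 N w))%:E)) :
  let a := Rintegral rho setT (fun z => z) in
  let muN := fun (N : nat) (t : R) => mu ks alpha delta rho P (X0 N) t in
  (forall t : R, 0 < t ->
     (fun N : nat => (muN N t - muN N 0) / t) @ \oo --> (alpha * a))
  /\
  (forall tN : nat -> R, tN @ \oo --> +oo ->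
     (fun N : nat => (muN N (tN N) - muN N 0) / tN N) @ \oo --> (alpha * a)).
Proof.
move=> a muN.
have [C rho_tail0] := hsupp.
have rho_int := integrable_id_bounded_support rho_tail0.
have Lambda_neq0 N : Lambda N alpha delta != 0.
  by rewrite lt0r_neq0 // ltr_wpDl // mulr_ge0 // ltW.
have drift_ratio N t : (0 < N)%N -> t != 0 -> (muN N t - muN N 0) / t = alpha * a.
  move=> N_gt0 t_neq0.
  by rewrite /muN !mu_linear // mulr0 addr0 addrAC subrr add0r mulfK.
split=> [t t_gt0 | tN tN_oo]; apply: cvg_near_cst; near=> N.
  by rewrite drift_ratio ?gt_eqF //; near: N; exists 1%N.
rewrite drift_ratio //; first by near: N; exists 1%N.
by rewrite gt_eqF //; near: N; exact: cvgry_gt tN_oo 0.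
Unshelve. all: end_near.
Qed.
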